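(* For every history formula $\varphi$ of CTL*KΔ$_m$ of knowledge depth $k$, every multiagent model $M$, every history $h$ of $M$ and every record tuple $\vec r$ that stops at $h$: $$h,\vec r\models\varphi\quad\text{iff}\quad \mathit{KT}^k(h,\vec r),\ \vec o(h,\vec r)\models_I\varphi.$$
   Context: Fix a countably infinite set $\mathit{AP}$ of atomic propositions, a finite nonempty set $\mathit{Obs}$ of observations, and a finite set of agents $\mathit{Ag}=\{a_1,\dots,a_m\}$. For a word $w$ we write $w_i$ for its letter at position $i$ (positions start at $0$), $w_{\le i}$ for its prefix ending at position $i$, $w_{\ge i}$ for its suffix starting at position $i$, $|w|$ for its length (finite words) and $\mathit{last}(w)$ for its last letter; $w\preceq w'$ means $w$ is a prefix of $w'$. Syntax of CTL*KΔ$_m$: history formulas $\varphi::=p\mid\neg\varphi\mid\varphi\wedge\varphi\mid\mathbf A\psi\mid\mathbf K_a\varphi\mid\Delta^{o}_a\varphi$ and path formulas $\psi::=\varphi\mid\neg\psi\mid\psi\wedge\psi\mid\mathbf X\psi\mid\psi\,\mathbf U\,\psi$, with $p\in\mathit{AP}$, $a\in\mathit{Ag}$, $o\in\mathit{Obs}$; formulas are history formulas. The knowledge depth of a formula is the maximal nesting depth of operators $\mathbf K_a$ (over all agents). A multiagent model is $M=(\mathit{AP}_f,S,T,V,\{\sim_o\}_{o\in\mathit{Obs}},s_\iota,\vec o_\iota)$ where $\mathit{AP}_f\subseteq\mathit{AP}$ is finite, $S$ is a finite set of states, $T\subseteq S\times S$ is left-total, $V:S\to2^{\mathit{AP}_f}$,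 each $\sim_o$ is an equivalence relation on $S$, $s_\iota\in S$, and $\vec o_\iota\in\mathit{Obs}^{\mathit{Ag}}$ gives each agent an initial observation. Paths are infinite sequences of states $s_0s_1\dots$ with $s_iTs_{i+1}$ (starting anywhere); histories are finite nonempty prefixes of paths. For a tuple $\vec o\in\mathit{Obs}^{\mathit{Ag}}$, $\vec o_a$ is its $a$-component, $\vec o_i=\vec o_{a_i}$, and $\vec o[a\leftarrow o']$ is $\vec o$ with $\vec o_a$ replaced by $o'$. An observation record is a finite word over $\mathit{Obs}\times\mathbb N$; $r_{=n}$ is the subword of $r$ consisting of the pairs with second component $n$; $r$ stops at $n$ if $r_{=m}$ is empty for all $m>n$. A record tuple is $\vec r=(\vec r_a)_{a\in\mathit{Ag}}$; $\vec r\cdot(o,n)_a$ is $\vec r$ with $\vec r_a$ replaced by $\vec r_a\cdot(o,n)$; $\vec r$ stops at a history $h$ if each $\vec r_a$ stops at $|h|-1$. For agent $a$: $\mathit{ol}_a(\vec r,0)=\vec o_{\iota,a}\cdot o_1\cdots o_k$ if $(\vec r_a)_{=0}=(o_1,0)\cdots(o_k,0)$, and $\mathit{ol}_a(\vec r,n+1)=\mathit{last}(\mathit{ol}_a(\vec r,n))\cdot o_1\cdots o_k$ if $(\vec r_a)_{=n+1}=(o_1,n+1)\cdots(o_k,n+1)$. $h\approx^{\vec r}_a h'$ iff $|h|=|h'|$ and for all $i<|h|$ and all $o$ in $\mathit{ol}_a(\vec r,i)$, $h_i\sim_o h'_i$. $\vec o(h,\vec r)$ is the tuple whose $a$-component is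 the last element of $\mathit{ol}_a(\vec r,|h|-1)$. Natural semantics: $h,\vec r\models p$ iff $p\in V(\mathit{last}(h))$; negation and conjunction as usual; $h,\vec r\models\mathbf A\psi$ iff for all paths $\pi$ with $h\preceq\pi$, $\pi,|h|-1,\vec r\models\psi$; $h,\vec r\models\mathbf K_a\varphi$ iff $h',\vec r\models\varphi$ for all histories $h'\approx^{\vec r}_a h$; $h,\vec r\models\Delta^o_a\varphi$ iff $h,\vec r\cdot(o,|h|-1)_a\models\varphi$; $\pi,n,\vec r\models\varphi$ iff $\pi_{\le n},\vec r\models\varphi$; negation and conjunction as usual; $\pi,n,\vec r\models\mathbf X\psi$ iff $\pi,n+1,\vec r\models\psi$; $\pi,n,\vec r\models\psi_1\mathbf U\psi_2$ iff there is $m\ge n$ with $\pi,m,\vec r\models\psi_2$ and $\pi,j,\vec r\models\psi_1$ for all $n\le j<m$. $k$-trees: a $0$-tree is $\langle s,\emptyset,\dots,\emptyset\rangle$ with $s\in S$; a $(k+1)$-tree is $\langle s,F_1,\dots,F_m\rangle$ with $s\in S$ and each $F_i$ a set of $k$-trees; $\mathit{root}(\langle s,F_1,\dots,F_m\rangle)=s$ and $\tau(a_i)=F_i$. $\mathit{KT}^0(h,\vec r)=\langle\mathit{last}(h),\emptyset,\dots,\emptyset\rangle$ and $\mathit{KT}^{k+1}(h,\vec r)=\langle\mathit{last}(h),F_1,\dots,F_m\rangle$ with $F_i=\{\mathit{KT}^k(h',\vec r)\mid h'\approx^{\vec r}_{a_i}h\}$. Updates: $U_T^0(\langle s,\emptyset,\dots\rangle,s',\vec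 o)=\langle s',\emptyset,\dots,\emptyset\rangle$; $U_T^{k+1}(\langle s,F_1,\dots,F_m\rangle,s',\vec o)=\langle s',F'_1,\dots,F'_m\rangle$ with $F'_i=\{U_T^k(\tau,s'',\vec o)\mid\tau\in F_i,\ s''\sim_{\vec o_i}s',\ \mathit{root}(\tau)Ts''\}$. $U_\Delta^0(\langle s,\emptyset,\dots\rangle,o,a_i)=\langle s,\emptyset,\dots,\emptyset\rangle$; $U_\Delta^{k+1}(\langle s,F_1,\dots,F_m\rangle,o,a_i)=\langle s,F'_1,\dots,F'_m\rangle$ with $F'_j=\{U_\Delta^k(\tau,o,a_i)\mid\tau\in F_j\}$ for $j\ne i$ and $F'_i=\{U_\Delta^k(\tau,o,a_i)\mid\tau\in F_i,\ \mathit{root}(\tau)\sim_o s\}$. (Below, $U_T^k,U_\Delta^k$ are applied to trees of the matching depth $k$.) Alternative semantics, for a $k$-tree $\tau$ and $\vec o\in\mathit{Obs}^{\mathit{Ag}}$: $\tau,\vec o\models_I p$ iff $p\in V(\mathit{root}(\tau))$; negation and conjunction as usual; $\tau,\vec o\models_I\mathbf A\psi$ iff for all paths $\pi$ with $\pi_0=\mathit{root}(\tau)$, $\pi,\tau,\vec o\models_I\psi$; $\tau,\vec o\models_I\mathbf K_a\varphi$ iff $\tau',\vec o\models_I\varphi$ for all $\tau'\in\tau(a)$; $\tau,\vec o\models_I\Delta^{o'}_a\varphi$ iff $U_\Delta^k(\tau,o',a),\vec o[a\leftarrow o']\models_I\varphi$; $\pi,\tau,\vec o\models_I\varphi$ iff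 $\tau,\vec o\models_I\varphi$; negation and conjunction as usual; $\pi,\tau,\vec o\models_I\mathbf X\psi$ iff $\pi_{\ge1},U_T^k(\tau,\pi_1,\vec o),\vec o\models_I\psi$; $\pi,\tau,\vec o\models_I\psi_1\mathbf U\psi_2$ iff there is $n\ge0$ with $\pi_{\ge n},(U_T^k)^n(\tau,\pi,\vec o),\vec o\models_I\psi_2$ and $\pi_{\ge j},(U_T^k)^j(\tau,\pi,\vec o),\vec o\models_I\psi_1$ for all $0\le j<n$, where $(U_T^k)^0(\tau,\pi,\vec o)=\tau$ and $(U_T^k)^{n+1}(\tau,\pi,\vec o)=U_T^k((U_T^k)^n(\tau,\pi,\vec o),\pi_{n+1},\vec o)$. *)

From mathcomp Require Import all_boot.
Set Implicit Arguments. Unset Strict Implicit. Unset Printing Implicit Defensive.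

(* Atomic propositions: AP = nat (countably infinite). Agents: a finType Ag.
   Observations: a finType Obs (nonemptiness is a hypothesis of the theorem). *)

Section Formulas.
Variables (Ag Obs : finType).

Inductive hform : Type :=
  | HAtom of nat
  | HNot of hform
  | HAnd of hform & hform
  | HA of pform
  | HK of Ag & hform
  | HDelta of Ag & Obs & hform
with pform : Type :=
  | PH of hform
  | PNot of pform
  | PAnd of pform & pform
  | PX of pform
  | PU of pform & pform.

Fixpoint kdepth (f : hform) : nat :=
  match f with
  | HAtom _ => 0
  | HNot g => kdepth g
  | HAnd g1 g2 => maxn (kdepth g1) (kdepth g2)
  | HA p => kdepthP p
  | HK _ g => (kdepth g).+1
  | HDelta _ _ g => kdepth g
  end
with kdepthP (p : pform) : nat :=
  match p with
  | PH g => kdepth g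
  | PNot q => kdepthP q
  | PAnd q1 q2 => maxn (kdepthP q1) (kdepthP q2)
  | PX q => kdepthP q
  | PU q1 q2 => maxn (kdepthP q1) (kdepthP q2)
  end.

End Formulas.

Record model (Ag Obs : finType) := Model {
  st : finType;
  APf : seq nat;
  trans : rel st;
  trans_total : forall s, exists s', trans s s';
  val : st -> nat -> bool;
  val_APf : forall s p, val s p -> p \in APf;
  sim : Obs -> rel st;
  sim_equiv : forall o, equivalence_rel (sim o);
  s_init : st;
  o_init : Ag -> Obs
}.
Arguments st {Ag Obs} m.
Arguments APf {Ag Obs} m.
Arguments trans {Ag Obs} m.
Arguments val {Ag Obs} m.
Arguments sim {Ag Obs} m.
Arguments s_init {Ag Obs} m.
Arguments o_init {Ag Obs} m.

Section Semantics.
Variables (Ag Obs : finType) (M : model Ag Obs).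
Local Notation S := (st M).
Local Notation T := (trans M).
Local Notation sι := (s_init M).

Definition ispath (pi : nat -> S) : Prop := forall i, T (pi i) (pi i.+1).

Definition hprefix (h : seq S) (pi : nat -> S) : Prop :=
  forall i, i < size h -> nth sι h i = pi i.

Definition history (h : seq S) : Prop :=
  h <> [::] /\ exists pi, ispath pi /\ hprefix h pi.

Definition hlast (h : seq S) : S := last sι h.

Definition pref (pi : nat -> S) (n : nat) : seq S := mkseq pi n.+1.

Definition rtuple := Ag -> seq (Obs * nat).

Definition obs_at (r : seq (Obs * nat)) (n : nat) : seq Obs :=
  [seq x.1 | x <- r & x.2 == n].

(* last element of ol_a(r, n) *)
Fixpoint ol_last (r : rtuple) (a : Ag) (n : nat) : Obs :=
  match n with
  | 0 => last (o_init M a) (obs_at (r a) 0)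
  | n'.+1 => last (ol_last r a n') (obs_at (r a) n'.+1)
  end.

Definition ol (r : rtuple) (a : Ag) (n : nat) : seq Obs :=
  match n with
  | 0 => o_init M a :: obs_at (r a) 0
  | n'.+1 => ol_last r a n' :: obs_at (r a) n'.+1
  end.

Definition approx (a : Ag) (r : rtuple) (h h' : seq S) : Prop :=
  size h = size h' /\
  forall i, i < size h -> forall o, o \in ol r a i -> sim M o (nth sι h i) (nth sι h' i).

Definition ovec (h : seq S) (r : rtuple) : Ag -> Obs :=
  fun a => ol_last r a (size h).-1.

Definition rstops (r : seq (Obs * nat)) (n : nat) : Prop :=
  forall m, n < m -> [seq x <- r | x.2 == m] = [::].

Definition stops_at (r : rtuple) (h : seq S) : Prop :=
  forall a, rstops (r a) (size h).-1.

Definition rupd (r : rtuple) (a : Ag) (o : Obs) (n : nat) : rtuple :=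
  fun b => if b == a then rcons (r b) (o, n) else r b.

Fixpoint semN (h : seq S) (r : rtuple) (f : hform Ag Obs) {struct f} : Prop :=
  match f with
  | HAtom p => val M (hlast h) p
  | HNot g => ~ semN h r g
  | HAnd g1 g2 => semN h r g1 /\ semN h r g2
  | HA p => forall pi, ispath pi -> hprefix h pi -> semP pi (size h).-1 r p
  | HK a g => forall h', history h' -> approx a r h' h -> semN h' r g
  | HDelta a o g => semN h (rupd r a o (size h).-1) g
  end
with semP (pi : nat -> S) (n : nat) (r : rtuple) (p : pform Ag Obs) {struct p} : Prop :=
  match p with
  | PH g => semN (pref pi n) r g
  | PNot q => ~ semP pi n r q
  | PAnd q1 q2 => semP pi n r q1 /\ semP pi n r q2
  | PX q => semP pi n.+1 r q
  | PU q1 q2 => exists m, n <= m /\ semP pi m r q2 /\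
                  forall j, n <= j -> j < m -> semP pi j r q1
  end.

(* k-trees: a 0-tree <s, ∅, ..., ∅> is represented by its root s;
   a (k+1)-tree <s, F_1, ..., F_m> by the pair (s, fun a => F_a), sets being
   predicates on k-trees. *)
Fixpoint ktree (k : nat) : Type :=
  match k with
  | 0 => S
  | k'.+1 => (S * (Ag -> ktree k' -> Prop))%type
  end.

Definition kroot (k : nat) : ktree k -> S :=
  match k return ktree k -> S with
  | 0 => fun t => t
  | k'.+1 => fun t => t.1
  end.

Fixpoint KT (k : nat) (h : seq S) (r : rtuple) : ktree k :=
  match k return ktree k with
  | 0 => hlast h
  | k'.+1 => (hlast h, fun a t => exists h', history h' /\ approx a r h' h /\ t = KT k' h' r)
  end.

Fixpoint UT (k : nat) : ktree k -> S -> (Ag -> Obs) -> ktree k :=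
  match k return ktree k -> S -> (Ag -> Obs) -> ktree k with
  | 0 => fun _ s' _ => s'
  | k'.+1 => fun t s' ov =>
      (s', fun a t' => exists t0 s'', t.2 a t0 /\ sim M (ov a) s'' s' /\
                         T (kroot t0) s'' /\ t' = UT t0 s'' ov)
  end.

Fixpoint UD (k : nat) : ktree k -> Obs -> Ag -> ktree k :=
  match k return ktree k -> Obs -> Ag -> ktree k with
  | 0 => fun t _ _ => t
  | k'.+1 => fun t o a =>
      (t.1, fun j t' => exists t0, t.2 j t0 /\ (j = a -> sim M o (kroot t0) t.1) /\
                           t' = UD t0 o a)
  end.

Fixpoint UTn (k : nat) (t : ktree k) (pi : nat -> S) (ov : Ag -> Obs) (n : nat) : ktree k :=
  match n with
  | 0 => t
  | n'.+1 => UT (UTn t pi ov n') (pi n'.+1) ov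
  end.

Definition ovupd (ov : Ag -> Obs) (a : Ag) (o : Obs) : Ag -> Obs :=
  fun b => if b == a then o else ov b.

Definition psuffix (pi : nat -> S) (n : nat) : nat -> S := fun i => pi (n + i).

Definition kchild (k : nat) : ktree k.+1 -> Ag -> ktree k -> Prop := fun t => t.2.

Fixpoint semI (k : nat) (t : ktree k) (ov : Ag -> Obs) (f : hform Ag Obs) {struct f} : Prop :=
  match f with
  | HAtom p => val M (kroot t) p
  | HNot g => ~ semI t ov g
  | HAnd g1 g2 => semI t ov g1 /\ semI t ov g2
  | HA p => forall pi, ispath pi -> pi 0 = kroot t -> semIP pi t ov p
  | HK a g =>
      (match k return ktree k -> Prop with
       | 0 => fun _ => True    (* tau(a) is empty for a 0-tree *)
       | k'.+1 => fun t => forall t', t.2 a t' -> semI t' ov g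
       end) t
  | HDelta a o g => semI (UD t o a) (ovupd ov a o) g
  end
with semIP (k : nat) (pi : nat -> S) (t : ktree k) (ov : Ag -> Obs) (p : pform Ag Obs)
  {struct p} : Prop :=
  match p with
  | PH g => semI t ov g
  | PNot q => ~ semIP pi t ov q
  | PAnd q1 q2 => semIP pi t ov q1 /\ semIP pi t ov q2
  | PX q => semIP (psuffix pi 1) (UT t (pi 1) ov) ov q
  | PU q1 q2 => exists n, semIP (psuffix pi n) (UTn t pi ov n) ov q2 /\
                  forall j, j < n -> semIP (psuffix pi j) (UTn t pi ov j) ov q1
  end.

End Semantics.

From mathcomp Require Import all_boot zify.
From Stdlib Require Import FunctionalExtensionality PropExtensionality.
Set Implicit Arguments. Unset Strict Implicit. Unset Printing Implicit Defensive.

(* The k-tree KT^k(h, r) is built so that it commutes with every operation of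
   the natural semantics: a Delta^o_a update of the record at time |h|-1 is
   U_Delta applied to the tree, and extending h by a state s (with r stopping
   at h) is U_T applied with the observation vector o(h, r), which does not
   change along the extension.  A simultaneous induction on history and path
   formulas, for every depth k at least the knowledge depth, then transfers
   each clause; the A clause needs that every path from last h prolongs h. *)

Section KnowledgeTrees.
Variables (Ag Obs : finType) (M : model Ag Obs).
Local Notation S := (st M).
Local Notation T := (trans M).
Local Notation si := (s_init M).
Local Notation rtuple := (rtuple Ag Obs).

Lemma hlast_nth (h : seq S) : hlast h = nth si h (size h).-1.
Proof. by rewrite /hlast nth_last. Qed.

Lemma path_from (s : S) : exists pi, ispath pi /\ pi 0 = s.
Proof.
pose succ (x : S) := odflt x [pick y | T x y].
have succP x : T x (succ x).
  rewrite /succ; case: pickP => [//|none].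
  by have [y Txy] := trans_total x; move: (none y); rewrite Txy.
by exists (fun i => iter i succ s); split => // i; apply: succP.
Qed.

(* pi is meant to start at last h; its first state takes the place of last h. *)
Definition splice (h : seq S) (pi : nat -> S) (i : nat) : S :=
  if i < (size h).-1 then nth si h i else pi (i - (size h).-1).

Lemma splice_path (h : seq S) (pi : nat -> S) :
  history h -> ispath pi -> pi 0 = hlast h -> ispath (splice h pi).
Proof.
move=> [_ [rho [rho_path rho_h]]] pi_path pi0 i; rewrite /splice.
case: (ltnP i (size h).-1) => [lt_i|le_i].
- case: (ltnP i.+1 (size h).-1) => [lt_i1|le_i1].
  + by rewrite !rho_h; [apply: rho_path | lia | lia].
  + have -> : i.+1 - (size h).-1 = 0 by lia.
    have last_i : i.+1 = (size h).-1 by lia.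
    by rewrite pi0 hlast_nth -last_i !rho_h; [apply: rho_path | lia | lia].
- rewrite ltnNge (leqW le_i) /=.
  have -> : i.+1 - (size h).-1 = (i - (size h).-1).+1 by lia.
  exact: pi_path.
Qed.

Lemma splice_hprefix (h : seq S) (pi : nat -> S) :
  pi 0 = hlast h -> hprefix h (splice h pi).
Proof.
move=> pi0 i lt_i; rewrite /splice; case: (ltnP i (size h).-1) => // ge_i.
have -> : i = (size h).-1 by lia.
by rewrite subnn pi0 hlast_nth.
Qed.

Lemma psuffix_splice (h : seq S) (pi : nat -> S) :
  psuffix (splice h pi) (size h).-1 = pi.
Proof.
by apply: functional_extensionality => i; rewrite /psuffix /splice ltnNge leq_addr addKn.
Qed.

Lemma psuffixD (pi : nat -> S) n j : psuffix (psuffix pi n) j = psuffix pi (n + j).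
Proof. by apply: functional_extensionality => i; rewrite /psuffix addnA. Qed.

Lemma pref_hprefix (h : seq S) (pi : nat -> S) :
  h <> [::] -> hprefix h pi -> pref pi (size h).-1 = h.
Proof.
move=> h_nil h_pi; have h_gt0 : 0 < size h by case: (h) h_nil.
apply: (@eq_from_nth _ si); rewrite size_mkseq; first lia.
by move=> i lt_i; rewrite nth_mkseq // h_pi //; lia.
Qed.

Lemma hprefix_pref (pi : nat -> S) n : hprefix (pref pi n) pi.
Proof. by move=> i; rewrite size_mkseq => lt_i; rewrite nth_mkseq. Qed.

Lemma history_pref (pi : nat -> S) n : ispath pi -> history (pref pi n).
Proof.
move=> pi_path; split; first by rewrite /pref mkseqS; case: (mkseq _ _).
by exists pi; split; last exact: hprefix_pref.
Qed.

Lemma history_rcons (h : seq S) (s : S) :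
  h <> [::] -> history (rcons h s) <-> history h /\ T (hlast h) s.
Proof.
move=> h_nil; have h_gt0 : 0 < size h by case: (h) h_nil.
split.
- move=> [_ [rho [rho_path rho_h]]].
  have rho_nth i : i <= size h -> rho i = nth si (rcons h s) i.
    by move=> le_i; rewrite rho_h // size_rcons.
  split.
    split=> //; exists rho; split=> // i lt_i.
    by rewrite rho_nth ?nth_rcons ?lt_i //; apply: ltnW.
  have -> : hlast h = rho (size h).-1.
    by rewrite hlast_nth rho_nth ?nth_rcons; [have -> : (size h).-1 < size h by lia | lia].
  have -> : s = rho (size h) by rewrite rho_nth // nth_rcons ltnn eqxx.
  by have {2}-> : size h = (size h).-1.+1 by lia.
- move=> [h_hist Ths].
  have [sig [sig_path sig0]] := path_from s.
  pose pi i := if i is i'.+1 then sig i' else hlast h.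
  have pi_path : ispath pi by case=> [|i] /=; [rewrite sig0 | apply: sig_path].
  split; first by case: (h) h_nil.
  exists (splice h pi); split; first exact: splice_path.
  move=> i; rewrite size_rcons ltnS leq_eqVlt => /orP[/eqP ->|lt_i].
  + rewrite nth_rcons ltnn eqxx /splice ltnNge.
    have -> : (size h).-1 <= size h by lia.
    by have -> : size h - (size h).-1 = 1 by lia.
  + by rewrite nth_rcons lt_i (@splice_hprefix h pi).
Qed.

Lemma obs_at_rupd (r : rtuple) a o n b i :
  obs_at (rupd r a o n b) i =
  if (b == a) && (n == i) then rcons (obs_at (r b) i) o else obs_at (r b) i.
Proof.
rewrite /rupd /obs_at; case: (b == a) => //=.
by rewrite filter_rcons /=; case: (n == i) => //; rewrite map_rcons.
Qed.

Lemma ol_last_rupd_lt (r : rtuple) a o n b i :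
  i < n -> ol_last M (rupd r a o n) b i = ol_last M r b i.
Proof.
elim: i => [|i IH] lt_i /=; rewrite obs_at_rupd.
- have -> : (n == 0) = false by apply/eqP; lia.
  by rewrite andbF.
- have -> : (n == i.+1) = false by apply/eqP; lia.
  by rewrite andbF IH //; lia.
Qed.

Lemma ol_last_rupd_eq (r : rtuple) a o n b :
  ol_last M (rupd r a o n) b n = if b == a then o else ol_last M r b n.
Proof.
case: n => [|n] /=; rewrite obs_at_rupd eqxx andbT; case: (b == a) => //.
- by rewrite last_rcons.
- by rewrite last_rcons.
- by rewrite ol_last_rupd_lt.
Qed.

Lemma mem_ol_rupd (r : rtuple) a o n b i x : i <= n ->
  (x \in ol M (rupd r a o n) b i) = (x \in ol M r b i) || [&& b == a, i == n & x == o].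
Proof.
case: i => [|i] le_i /=; rewrite obs_at_rupd; last rewrite ol_last_rupd_lt //.
all: rewrite [n == _]eq_sym; case: (b == a); rewrite /= ?orbF //.
all: case: (_ == n); rewrite /= ?orbF //.
all: by rewrite !inE mem_rcons inE; case: (x == o); rewrite ?orbT ?orbF.
Qed.

Lemma approx_size a (r : rtuple) (h h' : seq S) : approx a r h' h -> size h' = size h.
Proof. by case. Qed.

Lemma ovec_eq_size (h h' : seq S) (r : rtuple) : size h' = size h -> ovec h' r = ovec h r.
Proof. by rewrite /ovec => ->. Qed.

Lemma stops_at_eq_size (r : rtuple) (h h' : seq S) :
  size h' = size h -> stops_at r h -> stops_at r h'.
Proof. by rewrite /stops_at => ->. Qed.

Lemma approx_rupd (r : rtuple) a o b (h h' : seq S) : 0 < size h ->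
  approx b (rupd r a o (size h).-1) h' h <->
  approx b r h' h /\ (b = a -> sim M o (nth si h' (size h).-1) (nth si h (size h).-1)).
Proof.
move=> h_gt0; rewrite /approx; split.
- move=> [eq_size sim_h]; split; first split=> //.
  + by move=> i lt_i x x_ol; apply: sim_h; rewrite // mem_ol_rupd ?x_ol //; lia.
  + by move=> eq_b; apply: sim_h; [lia | rewrite mem_ol_rupd // eq_b !eqxx orbT].
- move=> [[eq_size sim_h] sim_last]; split=> // i lt_i x.
  rewrite mem_ol_rupd; last lia.
  case/orP=> [x_ol|/and3P[/eqP eq_b /eqP -> /eqP ->]]; first exact: sim_h.
  exact: sim_last.
Qed.

Lemma ovec_rupd (r : rtuple) a o (h : seq S) :
  ovec h (rupd r a o (size h).-1) = ovupd (ovec h r) a o.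
Proof. by apply: functional_extensionality => b; rewrite /ovec ol_last_rupd_eq. Qed.

Lemma stops_at_rupd (r : rtuple) a o (h : seq S) :
  stops_at r h -> stops_at (rupd r a o (size h).-1) h.
Proof.
move=> r_stops b m lt_m; rewrite /rupd; case: (b == a); last exact: r_stops.
rewrite filter_rcons /=; have -> : ((size h).-1 == m) = false by apply/eqP; lia.
exact: r_stops.
Qed.

Lemma ol_stops_at a (r : rtuple) (h : seq S) :
  0 < size h -> stops_at r h -> ol M r a (size h) = [:: ovec h r a].
Proof.
move=> h_gt0 r_stops; rewrite /ovec.
by case size_h: (size h) h_gt0 => [//|n] _ /=; rewrite /obs_at r_stops ?size_h.
Qed.

Lemma ovec_rcons (r : rtuple) (h : seq S) s :
  0 < size h -> stops_at r h -> ovec (rcons h s) r = ovec h r.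
Proof.
move=> h_gt0 r_stops; apply: functional_extensionality => a.
rewrite /ovec size_rcons /=.
by case size_h: (size h) h_gt0 => [//|n] _ /=; rewrite /obs_at r_stops ?size_h.
Qed.

Lemma approx_rcons a (r : rtuple) (h h' : seq S) s s' :
  0 < size h -> stops_at r h ->
  approx a r (rcons h' s') (rcons h s) <-> approx a r h' h /\ sim M (ovec h r a) s' s.
Proof.
move=> h_gt0 r_stops; rewrite /approx !size_rcons; split.
- move=> [[eq_size] sim_h]; split; first split=> //.
  + move=> i lt_i x x_ol; have := sim_h i (ltnW lt_i) x x_ol.
    by rewrite !nth_rcons -eq_size lt_i.
  + have := sim_h (size h) (ltac:(by rewrite eq_size)) (ovec h r a).
    by rewrite ol_stops_at // inE eqxx !nth_rcons eq_size ltnn eqxx => /(_ isT).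
- move=> [[eq_size sim_h] sim_last]; split; first by rewrite eq_size.
  move=> i; rewrite ltnS leq_eqVlt => /orP[/eqP ->|lt_i] x.
  + by rewrite eq_size ol_stops_at // inE => /eqP ->; rewrite !nth_rcons eq_size ltnn eqxx.
  + by move=> x_ol; rewrite !nth_rcons lt_i -eq_size lt_i; apply: sim_h.
Qed.

Lemma stops_at_pref (r : rtuple) (pi : nat -> S) n m :
  n <= m -> stops_at r (pref pi n) -> stops_at r (pref pi m).
Proof.
move=> le_nm r_stops a k; rewrite size_mkseq /= => lt_k.
by apply: r_stops; rewrite size_mkseq /=; lia.
Qed.

Lemma kroot_KT k (h : seq S) (r : rtuple) : kroot (KT k h r) = hlast h.
Proof. by case: k. Qed.

Lemma UD_KT k (h : seq S) (r : rtuple) a o : 0 < size h ->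
  UD (KT k h r) o a = KT k h (rupd r a o (size h).-1).
Proof.
elim: k h r => [//|k IH] h r h_gt0 /=.
congr pair; apply: functional_extensionality => b.
apply: functional_extensionality => t; apply: propositional_extensionality; split.
- move=> [_ [[h' [h'_hist [h'_h ->]]] [sim_last ->]]].
  have eq_size := approx_size h'_h.
  exists h'; split=> //; split; last by rewrite IH eq_size.
  apply/approx_rupd => //; split=> // eq_b.
  by have := sim_last eq_b; rewrite kroot_KT !hlast_nth eq_size.
- move=> [h' [h'_hist [h'_h ->]]].
  have eq_size := approx_size h'_h.
  move/approx_rupd: h'_h => /(_ h_gt0) [h'_h sim_last].
  exists (KT k h' r); split; first by exists h'.
  split; first by move=> eq_b; rewrite kroot_KT !hlast_nth eq_size; apply: sim_last.
  by rewrite IH eq_size.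
Qed.

Lemma UT_KT k (h : seq S) (r : rtuple) s : 0 < size h -> stops_at r h ->
  UT (KT k h r) s (ovec h r) = KT k (rcons h s) r.
Proof.
elim: k h r s => [|k IH] h r s h_gt0 r_stops /=; rewrite /hlast last_rcons //.
congr pair; apply: functional_extensionality => a.
apply: functional_extensionality => t; apply: propositional_extensionality; split.
- move=> [_ [s' [[h' [h'_hist [h'_h ->]]] [sim_s' [T_s' ->]]]]].
  have eq_size := approx_size h'_h.
  have h'_gt0 : 0 < size h' by rewrite eq_size.
  have r_stops' := stops_at_eq_size eq_size r_stops.
  exists (rcons h' s'); split.
  + by apply/history_rcons; [case: (h') h'_gt0 | rewrite -(kroot_KT k h' r)].
  + by split; [apply/approx_rcons | rewrite -IH // (ovec_eq_size _ eq_size)].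
- move=> [h'' [h''_hist [h''_h ->]]].
  case/lastP: h'' h''_hist h''_h => [|h' s'] h''_hist h''_h.
    by have := approx_size h''_h; rewrite size_rcons.
  have := approx_size h''_h; rewrite !size_rcons => -[eq_size].
  have h'_gt0 : 0 < size h' by rewrite eq_size.
  have r_stops' := stops_at_eq_size eq_size r_stops.
  have h'_nil : h' <> [::] by case: (h') h'_gt0.
  have [h'_hist T_s'] := (history_rcons s' h'_nil).1 h''_hist.
  have [h'_h sim_s'] := (approx_rcons _ _ _ _ h_gt0 r_stops).1 h''_h.
  exists (KT k h' r), s'; split; first by exists h'.
  split=> //; split; first by rewrite kroot_KT.
  by rewrite -(ovec_eq_size _ eq_size) IH.
Qed.

Lemma UTn_KT k (r : rtuple) (pi : nat -> S) n j : stops_at r (pref pi n) ->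
  ovec (pref pi (n + j)) r = ovec (pref pi n) r /\
  UTn (KT k (pref pi n) r) (psuffix pi n) (ovec (pref pi n) r) j = KT k (pref pi (n + j)) r.
Proof.
move=> r_stops; elim: j => [|j [ovec_j UTn_j]]; first by rewrite addn0.
have r_stops_j : stops_at r (pref pi (n + j)) by apply: stops_at_pref r_stops; lia.
have pref_gt0 : 0 < size (pref pi (n + j)) by rewrite size_mkseq.
have -> : pref pi (n + j.+1) = rcons (pref pi (n + j)) (pi (n + j.+1)).
  by rewrite addnS /pref mkseqS.
rewrite ovec_rcons // ovec_j; split=> //=.
by rewrite UTn_j /psuffix -ovec_j UT_KT.
Qed.

(* The depth k is arbitrary above the knowledge depth, since subformulas
   have smaller depth but are evaluated on the same tree. *)
Definition KT_adequate (phi : hform Ag Obs) := forall k (h : seq S) (r : rtuple),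
  kdepth phi <= k -> history h -> stops_at r h ->
  (semN h r phi <-> semI (KT k h r) (ovec h r) phi).

Definition KT_adequateP (p : pform Ag Obs) := forall k (pi : nat -> S) n (r : rtuple),
  kdepthP p <= k -> ispath pi -> stops_at r (pref pi n) ->
  (semP pi n r p <-> semIP (psuffix pi n) (KT k (pref pi n) r) (ovec (pref pi n) r) p).

Lemma KT_adequate_A p : KT_adequateP p -> KT_adequate (HA p).
Proof.
move=> IH k h r /= le_k h_hist r_stops.
have h_nil : h <> [::] by case: h_hist.
split=> [semA pi pi_path pi0 | semA pi pi_path h_pi].
- rewrite kroot_KT in pi0.
  have h_splice := splice_hprefix pi0.
  have := semA _ (splice_path h_hist pi_path pi0) h_splice.
  rewrite (IH k) ?(pref_hprefix h_nil h_splice) ?psuffix_splice //.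
  exact: splice_path.
- rewrite (IH k) ?(pref_hprefix h_nil h_pi) //; apply: semA.
  + by move=> i; rewrite /psuffix addnS; apply: pi_path.
  + rewrite kroot_KT /psuffix addn0 hlast_nth h_pi //.
    by case: (h) h_nil.
Qed.

Lemma KT_adequate_K a g : KT_adequate g -> KT_adequate (HK a g).
Proof.
move=> IH [//|k] h r /= le_k h_hist r_stops; split.
- move=> semK _ [h' [h'_hist [h'_h ->]]].
  have eq_size := approx_size h'_h.
  rewrite -(ovec_eq_size _ eq_size) -IH //; first exact: semK.
  exact: stops_at_eq_size r_stops.
- move=> semK h' h'_hist h'_h.
  have eq_size := approx_size h'_h.
  rewrite (IH k) //; last exact: stops_at_eq_size r_stops.
  by rewrite (ovec_eq_size _ eq_size); apply: semK; exists h'.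
Qed.

Lemma KT_adequate_Delta a o g : KT_adequate g -> KT_adequate (HDelta a o g).
Proof.
move=> IH k h r /= le_k h_hist r_stops.
have h_gt0 : 0 < size h by case: h_hist; case: (h).
by rewrite (IH k) ?ovec_rupd ?UD_KT //; apply: stops_at_rupd.
Qed.

Lemma semP_shift q k (pi : nat -> S) n (r : rtuple) j :
  KT_adequateP q -> kdepthP q <= k -> ispath pi -> stops_at r (pref pi n) ->
  semP pi (n + j) r q <->
  semIP (psuffix (psuffix pi n) j)
        (UTn (KT k (pref pi n) r) (psuffix pi n) (ovec (pref pi n) r) j)
        (ovec (pref pi n) r) q.
Proof.
move=> IH le_k pi_path r_stops; have [ovec_j UTn_j] := UTn_KT k j r_stops.
rewrite UTn_j -ovec_j psuffixD; apply: IH => //.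
by apply: stops_at_pref r_stops; lia.
Qed.

Lemma KT_adequate_U q1 q2 :
  KT_adequateP q1 -> KT_adequateP q2 -> KT_adequateP (PU q1 q2).
Proof.
move=> IH1 IH2 k pi n r /=; rewrite geq_max => /andP[le_k1 le_k2] pi_path r_stops.
have shift1 := semP_shift _ IH1 le_k1 pi_path r_stops.
have shift2 := semP_shift _ IH2 le_k2 pi_path r_stops.
split.
- move=> [m [le_nm [sem2 sem1]]]; exists (m - n); split.
  + by rewrite -shift2 subnKC.
  + by move=> j lt_j; rewrite -shift1; apply: sem1; lia.
- move=> [m [sem2 sem1]]; exists (n + m); split; first lia.
  split; first by rewrite shift2.
  by move=> j le_j lt_j; have := sem1 (j - n) ltac:(lia); rewrite -shift1 subnKC.
Qed.

Scheme hform_pform_ind := Induction for hform Sort Prop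
  with pform_hform_ind := Induction for pform Sort Prop.

Lemma KT_adequate_all : forall phi, KT_adequate phi.
Proof.
apply: (@hform_pform_ind Ag Obs KT_adequate KT_adequateP).
- by move=> p k h r _ _ _ /=; rewrite kroot_KT.
- by move=> g IH k h r le_k h_hist r_stops /=; rewrite (IH k).
- move=> g1 IH1 g2 IH2 k h r /=; rewrite geq_max => /andP[le_k1 le_k2] h_hist r_stops.
  by rewrite (IH1 k) // (IH2 k).
- exact: KT_adequate_A.
- exact: KT_adequate_K.
- exact: KT_adequate_Delta.
- by move=> g IH k pi n r /= le_k pi_path; apply: IH => //; apply: history_pref.
- by move=> q IH k pi n r le_k pi_path r_stops /=; rewrite (IH k).
- move=> q1 IH1 q2 IH2 k pi n r /=; rewrite geq_max => /andP[le_k1 le_k2] pi_path r_stops.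
  by rewrite (IH1 k) // (IH2 k).
- move=> q IH k pi n r /= le_k pi_path r_stops.
  by have := semP_shift 1 IH le_k pi_path r_stops; rewrite addn1.
- by move=> q1 IH1 q2 IH2; apply: KT_adequate_U.
Qed.

End KnowledgeTrees.

Theorem mainTheorem6 (Ag Obs : finType) (HObs : 0 < #|Obs|) (M : model Ag Obs)
  (phi : hform Ag Obs) (h : seq (st M)) (r : Ag -> seq (Obs * nat)) :
  history h -> stops_at r h ->
  (semN h r phi <-> semI (KT (kdepth phi) h r) (ovec h r) phi).
Proof. exact: KT_adequate_all. Qed.
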